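(* Consider the one-parameter family of maps $f(x,r)=x^2\exp(r-x)+k$ with bifurcation parameter $r\in\mathbb{R}$, where $k\in[0,3-2\sqrt2)$ is fixed. Then the family undergoes a fold bifurcation. More precisely: for $k=0$, the family undergoes a fold bifurcation at the fixed point $x_0=1$ for the bifurcation value $r_0=1$; for fixed $0<k<3-2\sqrt2$, there are two bifurcation values \[ r_{0,1}=x_{0,1}-\ln\big((2-x_{0,1})x_{0,1}\big),\qquad r_{0,2}=x_{0,2}-\ln\big((2-x_{0,2})x_{0,2}\big), \] where \[ x_{0,1}=\frac{k+1-\sqrt{k^2-6k+1}}{2},\qquad x_{0,2}=\frac{k+1+\sqrt{k^2-6k+1}}{2}, \] and for $i=1,2$ the family undergoes a fold bifurcation at the fixed point $x_{0,i}$ of $f(\cdot,r_{0,i})$ for the bifurcation value $r=r_{0,i}$.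
   Context: For a smooth one-parameter family $x\mapsto f(x,a)$ of maps of $\mathbb{R}$ with a fixed point $x_0$ at $a=a_0$, one says that a fold (saddle-node, tangent) bifurcation occurs at $x_0$ for $a=a_0$ if $\frac{\partial f}{\partial x}(x_0,a_0)=1$ and the nondegeneracy conditions (A.1) $\frac{\partial^2 f}{\partial x^2}(x_0,a_0)\neq0$ and (A.2) $\frac{\partial f}{\partial a}(x_0,a_0)\neq 0$ hold; then smooth invertible changes of coordinates and parameter transform the system into $\eta\mapsto\beta+\eta\pm\eta^2+O(\eta^3)$. *)

From Stdlib Require Import Reals.
From Coquelicot Require Import Coquelicot.
Open Scope R_scope.

Definition smooth_family (f : R -> R -> R) : Prop :=
  forall (n : nat) (x a : R),
    ex_derive_n (fun y => f y a) n x /\ ex_derive_n (fun b => f x b) n a.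

Definition fold_bifurcation (f : R -> R -> R) (x0 a0 : R) : Prop :=
  smooth_family f /\
  f x0 a0 = x0 /\
  Derive (fun x => f x a0) x0 = 1 /\
  Derive_n (fun x => f x a0) 2 x0 <> 0 /\
  Derive (fun a => f x0 a) a0 <> 0.

Definition fam (k : R) (x r : R) : R := x ^ 2 * exp (r - x) + k.

Definition x01 (k : R) : R := (k + 1 - sqrt (k ^ 2 - 6 * k + 1)) / 2.
Definition x02 (k : R) : R := (k + 1 + sqrt (k ^ 2 - 6 * k + 1)) / 2.
Definition rval (x : R) : R := x - ln ((2 - x) * x).

From Stdlib Require Import Reals Lra Psatz.
From Coquelicot Require Import Coquelicot.
Open Scope R_scope.

(* The tangency condition [(2 - x) x e^(r - x) = 1] forces [0 < x < 2] and
   [r = rval x]; substituting this into the fixed-point equation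
   [x^2 e^(r - x) + k = x] leaves the quadratic [x^2 - (1 + k) x + 2 k = 0],
   whose roots are [x01 k] and [x02 k].  At such a root the second derivative
   [(x^2 - 4 x + 2) e^(r - x)] could only vanish together with the
   discriminant [k^2 - 6 k + 1], which [k < 3 - 2 sqrt 2] keeps positive, and
   the parameter derivative [x^2 e^(r - x)] is nonzero.  Smoothness holds
   because in each variable the family is a quadratic times an exponential,
   a class of functions closed under differentiation. *)

Lemma ex_derive_n_of_derive_closed (P : (R -> R) -> Prop) :
  (forall f, P f -> exists g, P g /\ forall x, is_derive f x (g x)) ->
  forall n f x, P f -> ex_derive_n f n x.
Proof.
  intros closed n f x Pf.
  assert (Derive_n_in_P : forall m, exists g, P g /\ forall y, Derive_n f m y = g y).
  { induction m as [|m [g [Pg Hg]]]; [now exists f|].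
    destruct (closed g Pg) as [h [Ph Hh]].
    exists h; split; [exact Ph|]. intro y; simpl.
    rewrite (Derive_ext _ _ y Hg). now apply is_derive_unique. }
  destruct n as [|n]; [exact I|].
  destruct (Derive_n_in_P n) as [g [Pg Hg]]. simpl.
  apply (ex_derive_ext g); [intro y; now rewrite Hg|].
  destruct (closed g Pg) as [h [_ Hh]]. now exists (h x).
Qed.

Definition quad_exp (f : R -> R) : Prop :=
  exists p q c s t e, forall y, f y = (p * y ^ 2 + q * y + c) * exp (s * y + t) + e.

Lemma quad_exp_derive_closed (f : R -> R) :
  quad_exp f -> exists g, quad_exp g /\ forall x, is_derive f x (g x).
Proof.
  intros [p [q [c [s [t [e Hf]]]]]].
  exists (fun y => (s * p * y ^ 2 + (2 * p + s * q) * y + (q + s * c)) * exp (s * y + t) + 0).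
  split; [now exists (s * p), (2 * p + s * q), (q + s * c), s, t, 0|].
  intro x. apply (is_derive_ext (fun y => (p * y ^ 2 + q * y + c) * exp (s * y + t) + e)).
  { intro y. now rewrite Hf. }
  auto_derive; [easy|]. unfold Rminus. ring.
Qed.

Lemma smooth_fam (k : R) : smooth_family (fam k).
Proof.
  intros n x r. split; apply (ex_derive_n_of_derive_closed quad_exp quad_exp_derive_closed).
  - exists 1, 0, 0, (-1), r, k. intro y. unfold fam. f_equal. f_equal; [ring|f_equal; ring].
  - exists 0, 0, (x ^ 2), 1, (- x), k. intro b. unfold fam. f_equal. f_equal; [ring|f_equal; ring].
Qed.

Section FamDerivatives.

Variables k r : R.

Lemma fam_derive_x (x : R) :
  is_derive (fun y => fam k y r) x ((2 * x - x ^ 2) * exp (r - x)).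
Proof. unfold fam. auto_derive; [easy|]. unfold Rminus. ring. Qed.

Lemma fam_derive2_x (x : R) :
  Derive_n (fun y => fam k y r) 2 x = (x ^ 2 - 4 * x + 2) * exp (r - x).
Proof.
  simpl. rewrite (Derive_ext _ (fun y => (2 * y - y ^ 2) * exp (r - y)) x)
    by (intro y; apply is_derive_unique, fam_derive_x).
  apply is_derive_unique. auto_derive; [easy|]. unfold Rminus. ring.
Qed.

Lemma fam_derive_r (x : R) :
  is_derive (fun b => fam k x b) r (x ^ 2 * exp (r - x)).
Proof. unfold fam. auto_derive; [easy|]. unfold Rminus. ring. Qed.

End FamDerivatives.

Lemma fold_bifurcation_fam (k x r : R) :
  fam k x r = x -> (2 * x - x ^ 2) * exp (r - x) = 1 ->
  x ^ 2 - 4 * x + 2 <> 0 -> fold_bifurcation (fam k) x r.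
Proof.
  intros fixed tangent nondeg.
  pose proof (exp_pos (r - x)) as exp_gt0.
  assert (x_neq0 : x <> 0) by (intros ->; apply R1_neq_R0; rewrite <- tangent; ring).
  refine (conj (smooth_fam k) (conj fixed (conj _ (conj _ _)))).
  - now erewrite is_derive_unique by apply fam_derive_x.
  - rewrite fam_derive2_x. apply Rmult_integral_contrapositive. split; lra.
  - erewrite is_derive_unique by apply fam_derive_r.
    apply Rmult_integral_contrapositive. split; [now apply pow_nonzero | lra].
Qed.

Lemma exp_rval (x : R) : 0 < x < 2 -> exp (rval x - x) * ((2 - x) * x) = 1.
Proof.
  intros x_bounds. unfold rval.
  replace (x - ln ((2 - x) * x) - x) with (- ln ((2 - x) * x)) by ring.
  rewrite exp_Ropp, exp_ln by nra. field. nra.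
Qed.

Lemma fam_rval_fixed (k x : R) :
  0 < x < 2 -> x ^ 2 - (1 + k) * x + 2 * k = 0 -> fam k x (rval x) = x.
Proof.
  intros x_bounds root. pose proof (exp_rval x x_bounds) as e_inv.
  unfold fam. set (e := exp (rval x - x)) in *.
  apply Rminus_diag_uniq.
  (* Scaling [k - x] by [e (2 - x) x = 1] turns the defect into a multiple of the quadratic. *)
  transitivity (x ^ 2 * e + (k - x) * (e * ((2 - x) * x))); [rewrite e_inv; ring|].
  transitivity (e * x * (x ^ 2 - (1 + k) * x + 2 * k)); [ring|].
  rewrite root. ring.
Qed.

Lemma discriminant_neq0_nondegenerate (k x : R) :
  k ^ 2 - 6 * k + 1 <> 0 -> x ^ 2 - (1 + k) * x + 2 * k = 0 ->
  x ^ 2 - 4 * x + 2 <> 0.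
Proof.
  intros disc root inflection. apply disc.
  assert (linear : (k - 3) * x = 2 * k - 2).
  { replace ((k - 3) * x) with
      ((x ^ 2 - 4 * x + 2) - (x ^ 2 - (1 + k) * x + 2 * k) + 2 * k - 2) by ring.
    rewrite inflection, root. ring. }
  assert (scaled : (3 - k) ^ 2 * (x ^ 2 - 4 * x + 2) =
                   ((k - 3) * x) ^ 2 + 4 * (3 - k) * ((k - 3) * x) + 2 * (3 - k) ^ 2) by ring.
  rewrite inflection, linear in scaled. ring_simplify in scaled. lra.
Qed.

Lemma fold_bifurcation_fam_rval (k x : R) :
  0 < x < 2 -> x ^ 2 - (1 + k) * x + 2 * k = 0 -> x ^ 2 - 4 * x + 2 <> 0 ->
  fold_bifurcation (fam k) x (rval x).
Proof.
  intros x_bounds root nondeg.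
  apply fold_bifurcation_fam; [now apply fam_rval_fixed | | exact nondeg].
  rewrite <- (exp_rval x x_bounds). ring.
Qed.

Lemma discriminant_pos (k : R) :
  0 <= k -> k < 3 - 2 * sqrt 2 -> 0 < k ^ 2 - 6 * k + 1.
Proof.
  intros k_ge0 k_lt. pose proof (sqrt_sqrt 2 ltac:(lra)) as sqrt2_sq.
  pose proof Rlt_sqrt2_0 as sqrt2_pos.
  (* [k^2 - 6 k + 1 = (3 - k)^2 - (2 sqrt 2)^2] with [3 - k > 2 sqrt 2 > 0]. *)
  nra.
Qed.

Lemma rval_1 : rval 1 = 1.
Proof. unfold rval. replace ((2 - 1) * 1) with 1 by ring. rewrite ln_1. ring. Qed.

Section FixedPoints.

Variable k : R.
Hypothesis disc_ge0 : 0 <= k ^ 2 - 6 * k + 1.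

Lemma x01_root : x01 k ^ 2 - (1 + k) * x01 k + 2 * k = 0.
Proof. pose proof (sqrt_sqrt _ disc_ge0). unfold x01. nra. Qed.

Lemma x02_root : x02 k ^ 2 - (1 + k) * x02 k + 2 * k = 0.
Proof. pose proof (sqrt_sqrt _ disc_ge0). unfold x02. nra. Qed.

Hypothesis k_lt3 : k < 3.

Lemma x01_bounds : 0 < k -> 0 < x01 k < 2.
Proof.
  intros k_pos. pose proof (sqrt_sqrt _ disc_ge0). pose proof (sqrt_pos (k ^ 2 - 6 * k + 1)).
  unfold x01. split; nra.
Qed.

Lemma x02_bounds : 0 <= k -> 0 < x02 k < 2.
Proof.
  intros k_ge0. pose proof (sqrt_sqrt _ disc_ge0). pose proof (sqrt_pos (k ^ 2 - 6 * k + 1)).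
  unfold x02. split; nra.
Qed.

End FixedPoints.

Theorem theorem2p3 (k : R) (hk0 : 0 <= k) (hk1 : k < 3 - 2 * sqrt 2) :
  (k = 0 -> fold_bifurcation (fam k) 1 1) /\
  (0 < k ->
     fold_bifurcation (fam k) (x01 k) (rval (x01 k)) /\
     fold_bifurcation (fam k) (x02 k) (rval (x02 k))).
Proof.
  pose proof (discriminant_pos k hk0 hk1) as disc_pos.
  assert (k_lt3 : k < 3) by (pose proof Rlt_sqrt2_0; lra).
  assert (disc_ge0 : 0 <= k ^ 2 - 6 * k + 1) by lra.
  split.
  - intros ->. rewrite <- rval_1 at 2.
    apply fold_bifurcation_fam_rval; [lra | ring | lra].
  - intros k_pos. split; apply fold_bifurcation_fam_rval.
    + now apply x01_bounds.
    + now apply x01_root.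
    + apply (discriminant_neq0_nondegenerate k); [lra | now apply x01_root].
    + now apply x02_bounds.
    + now apply x02_root.
    + apply (discriminant_neq0_nondegenerate k); [lra | now apply x02_root].
Qed.
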